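(* Let $n\ge 3$ and let $C\in\mathbb{R}^{n\times n}$ be nonnegative, doubly stochastic, irreducible, with zero diagonal entries. Consider the map $F(x)=C^\top x+\mathrm{diag}(x)x-C^\top\mathrm{diag}(x)x$ on the simplex $\Delta$. Then the set of points $x\in\Delta$ with $F(x)=x$ is exactly $\{e_1,\dots,e_n,\tfrac{1}{n}\mathbf{1}\}$; in particular, $\tfrac1n\mathbf 1$ is the unique equilibrium of the Modified DeGroot-Friedkin model $x(s+1)=F(x(s))$ in $\Delta$ other than $e_1,\dots,e_n$.
   Context: $\Delta=\{x\in\mathbb{R}^n: x\ge 0,\ \sum_i x_i=1\}$; $e_i$ is the $i$th standard basis vector; $\mathbf 1$ is the all-ones vector. Doubly stochastic means nonnegative with all row sums and all column sums equal to $1$. *)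

From HB Require Import structures.
From mathcomp Require Import all_boot all_order all_algebra.
Set Implicit Arguments. Unset Strict Implicit. Unset Printing Implicit Defensive.
Import Order.TTheory GRing.Theory Num.Theory.
Local Open Scope ring_scope.

Definition in_simplex (R : realFieldType) (n : nat) (x : 'cV[R]_n) : Prop :=
  (forall i, 0 <= x i 0) /\ \sum_i x i 0 = 1.

Definition nonneg_mx (R : realFieldType) (n : nat) (C : 'M[R]_n) : Prop :=
  forall i j, 0 <= C i j.

Definition doubly_stochastic (R : realFieldType) (n : nat) (C : 'M[R]_n) : Prop :=
  nonneg_mx C /\ (forall i, \sum_j C i j = 1) /\ (forall j, \sum_i C i j = 1).

(* Irreducible (nonnegative) matrix: its associated digraph, with an edge
   i -> j iff C i j != 0, is strongly connected. *)
Definition irreducible_mx (R : realFieldType) (n : nat) (C : 'M[R]_n) : Prop :=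
  forall i j : 'I_n, connect (fun a b => C a b != 0) i j.

Definition zero_diag (R : realFieldType) (n : nat) (C : 'M[R]_n) : Prop :=
  forall i, C i i = 0.

Definition mDF_map (R : realFieldType) (n : nat) (C : 'M[R]_n) (x : 'cV[R]_n)
  : 'cV[R]_n :=
  C^T *m x + diag_mx x^T *m x - C^T *m (diag_mx x^T *m x).

Definition basis_vec (R : realFieldType) (n : nat) (i : 'I_n) : 'cV[R]_n :=
  delta_mx i 0.

(* Writing [v k = x_k (1 - x_k)], the fixed-point equation F(x) = x says exactly
   that v = C^T v.  Since C^T is stochastic and irreducible, the maximum
   principle forces v to be constant.  If the constant is 0, every x_k is 0 or 1
   and x is a vertex e_i.  Otherwise every x_k is nonzero, and for any two
   indices x_k (1 - x_k) = x_l (1 - x_l) gives x_k = x_l or x_k + x_l = 1; the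
   latter would force the remaining (n >= 3) coordinates to vanish, so all
   coordinates agree and x = 1/n 1. *)
From HB Require Import structures.
From mathcomp Require Import all_boot all_order all_algebra lra zify.
Set Implicit Arguments. Unset Strict Implicit. Unset Printing Implicit Defensive.
Import Order.TTheory GRing.Theory Num.Theory.
Local Open Scope ring_scope.

Section ModifiedDeGrootFriedkin.

Variables (R : realFieldType) (n : nat).
Implicit Types (C : 'M[R]_n) (x : 'cV[R]_n).

Definition bern_var x (k : 'I_n) : R := x k 0 * (1 - x k 0).

Lemma mDF_mapE C x k :
  mDF_map C x k 0 = x k 0 + \sum_j C j k * bern_var x j - bern_var x k.
Proof.
rewrite /mDF_map mul_diag_mx !mxE /bern_var.
under eq_bigr do rewrite !mxE.
under [X in _ - X]eq_bigr do rewrite !mxE.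
under [in RHS]eq_bigr do rewrite mulrBr mulr1 mulrBr.
rewrite sumrB mulrBr mulr1; lra.
Qed.

Lemma mDF_map_fixedP C x :
  mDF_map C x = x <-> forall k, bern_var x k = \sum_j C j k * bern_var x j.
Proof.
split=> [hF k | hv].
  by move: (congr1 (fun M : 'cV_n => M k 0) hF); rewrite /= mDF_mapE; lra.
by apply/matrixP => k j; rewrite (ord1 j) mDF_mapE (hv k) addrK.
Qed.

(* Maximum principle: the column-weighted average of a maximal value is maximal
   only if every in-neighbour attains the maximum too. *)
Lemma fixed_colstochastic_const C (y : 'I_n -> R) :
    nonneg_mx C -> (forall j, \sum_i C i j = 1) -> irreducible_mx C ->
    (forall k, y k = \sum_j C j k * y j) ->
  forall i j, y i = y j.
Proof.
move=> hC hcol hirr hy i j.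
have [m _ hm] := @arg_maxP _ _ _ i xpredT y isT.
have max_prop a b : y b = y m -> C a b != 0 -> y a = y m.
  move=> hb hab.
  have hsum0 : \sum_l C l b * (y m - y l) = 0.
    under eq_bigr do rewrite mulrBr.
    by rewrite sumrB -big_distrl /= hcol mul1r -hy hb subrr.
  have hterm0 l : true -> 0 <= C l b * (y m - y l).
    by move=> _; rewrite mulr_ge0 // subr_ge0; apply: hm.
  move/eqP: (@psumr_eq0P _ _ _ _ hterm0 hsum0 a isT).
  by rewrite mulf_eq0 (negbTE hab) subr_eq0 => /eqP.
have y_max k : y k = y m.
  have /connectP [p hp hl] := hirr k m.
  elim: p k hp hl => [|b p IH] k /=; first by move=> _ ->.
  by move=> /andP [hkb hp] hl; apply: max_prop (IH b hp hl) hkb.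
by rewrite !y_max.
Qed.

Lemma simplex_sumD1_eq0 x k :
  in_simplex x -> x k 0 = 1 -> forall l, l != k -> x l 0 = 0.
Proof.
case=> hx0 hx1 hk l hlk.
have hrest : \sum_(j | j != k) x j 0 = 0.
  by move: hx1; rewrite (bigD1 k) //= hk; lra.
by apply: (psumr_eq0P _ hrest) => // j _.
Qed.

Lemma simplex_bern_var0 x :
  in_simplex x -> (forall k, bern_var x k = 0) -> exists i, x = basis_vec R i.
Proof.
move=> hx hv; have [hx0 hx1] := hx.
have [i hi] : exists i, x i 0 != 0.
  apply/existsP; apply: contraT; rewrite negb_exists => /forallP hx_eq0.
  move: hx1; rewrite big1 => [/eqP|k _]; first by rewrite eq_sym oner_eq0.
  by apply/eqP; rewrite -[_ == _]negbK hx_eq0.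
have hi1 : x i 0 = 1.
  by move/eqP: (hv i); rewrite /bern_var mulf_eq0 (negbTE hi) subr_eq0 => /eqP.
exists i; apply/matrixP => k j; rewrite (ord1 j) !mxE.
have [->|hk] := eqVneq k i; first by rewrite hi1.
exact: simplex_sumD1_eq0 hx hi1 k hk.
Qed.

Lemma bern_var_eqP x k l :
  bern_var x k = bern_var x l -> x k 0 = x l 0 \/ x k 0 + x l 0 = 1.
Proof.
rewrite /bern_var => hkl.
have : (x k 0 - x l 0) * (1 - x k 0 - x l 0) = 0 by lra.
by move/eqP; rewrite mulf_eq0 => /orP [] /eqP h; [left | right]; lra.
Qed.

Lemma simplex_pair_sum1 x k l r :
    in_simplex x -> k != l -> x k 0 + x l 0 = 1 -> r != k -> r != l ->
  x r 0 = 0.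
Proof.
case=> hx0 hx1 hkl hsum hrk hrl.
have hrest : \sum_(i | (i != k) && (i != l)) x i 0 = 0.
  by move: hx1; rewrite (bigD1 k) //= (bigD1 l) 1?eq_sym //=; lra.
by apply: (psumr_eq0P _ hrest) => [i _|]; rewrite ?hx0 ?hrk ?hrl.
Qed.

Lemma simplex_const x :
  in_simplex x -> (forall k l, x k 0 = x l 0) -> x = const_mx n%:R^-1.
Proof.
case=> _ hx1 hconst; apply/matrixP => k j; rewrite (ord1 j) mxE.
have hsum : x k 0 * n%:R = 1.
  rewrite -[RHS]hx1 (eq_bigr (fun=> x k 0)) => [|l _]; last exact: hconst.
  by rewrite sumr_const card_ord mulr_natr.
have hn0 : n%:R != 0 :> R.
  by apply/eqP => hn; move/eqP: hsum; rewrite hn mulr0 eq_sym oner_eq0.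
by rewrite -(mulfK hn0 (x k 0)) hsum mul1r.
Qed.

Lemma simplex_bern_var_const x :
    (2 < n)%N -> in_simplex x -> (forall k l, bern_var x k = bern_var x l) ->
    (forall k, bern_var x k != 0) ->
  x = const_mx n%:R^-1.
Proof.
move=> hn hx hv hv0; apply: simplex_const => // k l.
case: (bern_var_eqP (hv k l)) => [//|hsum].
have [->|hkl] := eqVneq k l; first by [].
have /card_gt0P [r] : (0 < #|~: [set k; l]|)%N.
  by have := cardsC [set k; l]; rewrite cards2 card_ord hkl /=; lia.
rewrite !inE negb_or => /andP [hrk hrl].
by move: (hv0 r); rewrite /bern_var (simplex_pair_sum1 hx hkl hsum hrk hrl) mul0r eqxx.
Qed.

End ModifiedDeGrootFriedkin.

Theorem theorem3 (R : realFieldType) (n : nat) (C : 'M[R]_n)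
  (hn : (3 <= n)%N) (hds : doubly_stochastic C) (hirr : irreducible_mx C)
  (hdiag : zero_diag C) :
  forall x : 'cV[R]_n, in_simplex x ->
    (mDF_map C x = x <->
       (exists i : 'I_n, x = basis_vec R i) \/ x = const_mx (n%:R^-1)).
Proof.
move: hds => [hC [_ hcol]] x hx; rewrite mDF_map_fixedP; split.
- move=> hfix; have hv := fixed_colstochastic_const hC hcol hirr hfix.
  pose k0 : 'I_n := Ordinal (ltnW hn).
  have [hzero|hnonzero] := eqVneq (bern_var x k0) 0.
    by left; apply: simplex_bern_var0 => // k; rewrite (hv k k0).
  by right; apply: simplex_bern_var_const => // k; rewrite (hv k k0).
- have hconst c k : c = \sum_j C j k * c by rewrite -big_distrl /= hcol mul1r.
  case=> [[i ->]|->] k.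
  + have hv0 j : bern_var (basis_vec R i) j = 0.
      by rewrite /bern_var !mxE; case: (j == i); rewrite /= ?subrr ?mulr0 ?mul0r.
    by under eq_bigr do rewrite hv0; rewrite hv0 -hconst.
  + by under eq_bigr do rewrite /bern_var mxE; rewrite /bern_var mxE -hconst.
Qed.
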